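(* Let $\theta$ be a parameter vector and let $u_\theta(x,y)$ and $s_\theta(x,y)$ be real-valued functions of $\theta$ (differentiable in $\theta$) for each prompt $x$ and response $y$. For a fixed triple $(x,y_w,y_l)$ put $\Delta u_\theta = u_\theta(x,y_w)-u_\theta(x,y_l)$, $\mu=\sigma(\Delta u_\theta)$ where $\sigma(t)=1/(1+e^{-t})$, and let $\tau=\tau(\theta)\in(0,\infty)$ be the concentration, namely $\tau=\mathrm{Softplus}(s_\theta(x,y_w))+\mathrm{Softplus}(s_\theta(x,y_l))+1$ with $\mathrm{Softplus}(t)=\log(1+e^t)$. Let $\alpha_0,\beta_0>0$ and $\lambda>0$ be fixed constants (independent of $\theta$), set $\alpha=\mu\tau$, $\beta=(1-\mu)\tau$, and define $$\mathcal{L}_{\mathrm{ICRM}} = -\bigl(\psi(\mu\tau)-\psi(\tau)\bigr) + \lambda\, \mathbb{D}_{\mathrm{KL}}\bigl(\mathrm{Beta}(\alpha,\beta)\,\|\,\mathrm{Beta}(\alpha_0,\beta_0)\bigr).$$ Let $\varepsilon := 1-\mu$. Then, for finite $\tau\in(0,\infty)$ held fixed, as $\varepsilon\to 0^+$, $$\nabla_\theta \mathcal{L}_{\mathrm{ICRM}} = c_u\,\nabla_\theta \Delta u_\theta + c_\tau\,\nabla_\theta \tau,\qquad c_u = \frac{\lambda\beta_0}{\varepsilon\tau}+O(1),\quad c_\tau = -\frac{\lambda\beta_0}{\varepsilon\tau^2}+O(1),$$ i.e. the utility coefficient behaves to leading order like $\lambda\beta_0/(\varepsilon\tau)$ and the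 confidence coefficient like $-\lambda\beta_0/(\varepsilon\tau^2)$.
   Context: $\psi(x)=\frac{d}{dx}\log\Gamma(x)$ is the digamma function. $\mathrm{Beta}(a,b)$ denotes the Beta distribution on $[0,1]$ with parameters $a,b>0$, and $\mathbb{D}_{\mathrm{KL}}(q\|p)$ is the Kullback–Leibler divergence, which for Betas has the closed form $\mathbb{D}_{\mathrm{KL}}(\mathrm{Beta}(\alpha,\beta)\|\mathrm{Beta}(\alpha_0,\beta_0)) = \log\frac{\Gamma(\alpha+\beta)}{\Gamma(\alpha)\Gamma(\beta)}-\log\frac{\Gamma(\alpha_0+\beta_0)}{\Gamma(\alpha_0)\Gamma(\beta_0)}+(\alpha-\alpha_0)[\psi(\alpha)-\psi(\alpha+\beta)]+(\beta-\beta_0)[\psi(\beta)-\psi(\alpha+\beta)]$. The gradient $\nabla_\theta\mathcal{L}_{\mathrm{ICRM}}$ is computed by the chain rule through $\mu=\sigma(\Delta u_\theta)$ and $\tau$, i.e. $\nabla_\theta\mathcal{L}=\frac{\partial\mathcal{L}}{\partial\mu}\mu(1-\mu)\nabla_\theta\Delta u_\theta+\frac{\partial\mathcal{L}}{\partial\tau}\nabla_\theta\tau$. *)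

From Stdlib Require Import Reals.
From Coquelicot Require Import Coquelicot.
Open Scope R_scope.

Definition Gamma (x : R) : R :=
  RInt_gen (fun t => exp ((x - 1) * ln t) * exp (- t))
           (at_right 0) (Rbar_locally p_infty).

Definition lnGamma (x : R) : R := ln (Gamma x).

Definition digamma (x : R) : R := Derive lnGamma x.

Definition KL_beta (a b a0 b0 : R) : R :=
  ln (Gamma (a + b) / (Gamma a * Gamma b))
  - ln (Gamma (a0 + b0) / (Gamma a0 * Gamma b0))
  + (a - a0) * (digamma a - digamma (a + b))
  + (b - b0) * (digamma b - digamma (a + b)).

(* L_ICRM as a function of mu = sigma(Delta u) and the concentration tau. *)
Definition L_ICRM (a0 b0 lam mu tau : R) : R :=
  - (digamma (mu * tau) - digamma tau)
  + lam * KL_beta (mu * tau) ((1 - mu) * tau) a0 b0.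

(* Chain rule: grad L = (dL/dmu) mu(1-mu) grad(Delta u) + (dL/dtau) grad tau.
   The utility coefficient c_u and confidence coefficient c_tau. *)
Definition c_u (a0 b0 lam mu tau : R) : R :=
  Derive (fun m => L_ICRM a0 b0 lam m tau) mu * (mu * (1 - mu)).

Definition c_tau (a0 b0 lam mu tau : R) : R :=
  Derive (fun t => L_ICRM a0 b0 lam mu t) tau.

From Stdlib Require Import Reals Lra Psatz Classical FunctionalExtensionality.
From Coquelicot Require Import Coquelicot.
Open Scope R_scope.

(* With mu = 1 - eps, a = mu tau and b = eps tau, the chain rule writes c_u and
   c_tau as combinations of trigamma at a, b and tau with coefficients polynomial
   in eps.  Only trigamma b blows up as eps -> 0; the recurrence
   trigamma b = trigamma (b + 1) + 1 / b^2 isolates the pole, whose coefficients are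
   exactly lam b0 / (eps tau) and - lam b0 / (eps tau^2), and what remains is
   continuous at eps = 0, hence bounded.  Most of the work is the analysis of
   Gamma, defined as an improper integral: Gamma^(k) x = int (ln t)^k t^(x-1) e^-t dt
   by differentiation under the integral sign (the integrands are dominated by
   t^(x +- c - 1) e^-t), and Gamma (x + 1) = x Gamma x by integration by parts. *)

(** * Elementary real analysis *)

Lemma continuous_of_ex_derive (f : R -> R) x : ex_derive f x -> continuous f x.
Proof. apply (ex_derive_continuous (K := R_AbsRing) (V := R_NormedModule)). Qed.

Lemma exp_le_exp x y : x <= y -> exp x <= exp y.
Proof.
  intros [Hlt | ->]; [left; now apply exp_increasing | right; reflexivity].
Qed.

Lemma exp_pow y n : exp y ^ n = exp (INR n * y).
Proof.
  induction n as [| n IH]; simpl pow.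
  - rewrite Rmult_0_l, exp_0. reflexivity.
  - rewrite IH, <- exp_plus, S_INR. f_equal. ring.
Qed.

Lemma exp_abs_le_cosh s : exp (Rabs s) <= exp s + exp (- s).
Proof.
  pose proof (exp_pos s). pose proof (exp_pos (- s)).
  destruct (Rle_or_lt 0 s).
  - rewrite Rabs_right by lra. lra.
  - rewrite Rabs_left by lra. lra.
Qed.

Lemma pow_abs_le_exp s c m : 0 < c ->
  Rabs s ^ m <= (INR m / c) ^ m * (exp (c * s) + exp (- (c * s))).
Proof.
  intros Hc. destruct m as [| n].
  - simpl. pose proof (exp_pos (c * s)). pose proof (exp_ineq1_le (- (c * s))).
    pose proof (exp_ineq1_le (c * s)). lra.
  - set (M := INR (S n)).
    assert (HM : 0 < M) by (unfold M; apply lt_0_INR; lia).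
    assert (H1 : Rabs s <= (M / c) * exp (c * Rabs s / M)).
    { pose proof (exp_ineq1_le (c * Rabs s / M)).
      replace (Rabs s) with ((M / c) * (c * Rabs s / M)) at 1 by (field; lra).
      apply Rmult_le_compat_l; [apply Rlt_le, Rdiv_lt_0_compat |]; lra. }
    eapply Rle_trans; [apply pow_incr; split; [apply Rabs_pos | exact H1] |].
    rewrite Rpow_mult_distr, exp_pow. fold M.
    apply Rmult_le_compat_l; [apply pow_le, Rlt_le, Rdiv_lt_0_compat; lra |].
    replace (M * (c * Rabs s / M)) with (Rabs (c * s))
      by (rewrite Rabs_mult, (Rabs_right c) by lra; field; lra).
    apply exp_abs_le_cosh.
Qed.

Lemma exp_sub_tangent_bound u : 0 <= exp u - 1 - u <= u ^ 2 * exp (Rabs u).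
Proof.
  pose proof (exp_ineq1_le u). pose proof (exp_ineq1_le (- u)).
  assert (Hinv : exp u * exp (- u) = 1) by (rewrite <- exp_plus, Rplus_opp_r; apply exp_0).
  pose proof (exp_pos u). pose proof (exp_pos (- u)).
  split; [lra |].
  destruct (Rle_or_lt 0 u).
  - rewrite Rabs_right by lra.
    assert (exp u - 1 <= u * exp u) by nra.
    nra.
  - rewrite Rabs_left by lra.
    assert ((exp u - 1 - u) * (1 - u) <= u ^ 2) by nra.
    nra.
Qed.

Lemma locally_pos x : 0 < x -> locally x (fun y => 0 < y).
Proof.
  intros Hx. exists (mkposreal x Hx). intros y Hy.
  apply Rabs_lt_between' in Hy. simpl in Hy. lra.
Qed.

Lemma locally_interval lo hi x : lo < x < hi -> locally x (fun y => lo < y < hi).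
Proof.
  intros H. assert (Hr : 0 < Rmin (x - lo) (hi - x)) by (apply Rmin_glb_lt; lra).
  exists (mkposreal _ Hr). intros y Hy. apply Rabs_lt_between' in Hy. simpl in Hy.
  pose proof (Rmin_l (x - lo) (hi - x)). pose proof (Rmin_r (x - lo) (hi - x)). lra.
Qed.

Lemma is_derive_succ x : is_derive (fun y => y + 1) x 1.
Proof. auto_derive; [exact I | ring]. Qed.

Lemma is_derive_of_quadratic_remainder (f : R -> R) x l C delta : 0 < delta ->
  (forall h, Rabs h <= delta -> Rabs (f (x + h) - f x - h * l) <= h ^ 2 * C) ->
  is_derive f x l.
Proof.
  intros Hdelta Hrem. apply is_derive_Reals. intros eps Heps.
  set (C' := Rabs C + 1).
  assert (HC' : 0 < C') by (unfold C'; pose proof (Rabs_pos C); lra).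
  assert (Hd : 0 < Rmin delta (eps / C')) by (apply Rmin_glb_lt; [| apply Rdiv_lt_0_compat]; lra).
  exists (mkposreal _ Hd). intros h Hh0 Hh. simpl in Hh.
  assert (Hh1 : Rabs h <= delta) by (pose proof (Rmin_l delta (eps / C')); lra).
  assert (Hh2 : Rabs h * C' < eps).
  { pose proof (Rmin_r delta (eps / C')).
    apply Rmult_lt_reg_r with (/ C'); [apply Rinv_0_lt_compat; lra |].
    rewrite Rmult_assoc, Rinv_r by lra. unfold Rdiv in *. lra. }
  assert (Hpos : 0 < Rabs h) by (apply Rabs_pos_lt; auto).
  specialize (Hrem h Hh1). rewrite <- pow2_abs in Hrem.
  replace ((f (x + h) - f x) / h - l) with ((f (x + h) - f x - h * l) / h) by (field; auto).
  rewrite Rabs_div by auto.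
  apply Rmult_lt_reg_r with (Rabs h); auto.
  unfold Rdiv. rewrite Rmult_assoc, Rinv_l, Rmult_1_r by lra.
  assert (C <= C') by (unfold C'; pose proof (Rle_abs C); lra).
  nra.
Qed.

Lemma bounded_near_of_continuous (f : R -> R) x : continuous f x ->
  exists C delta, 0 < delta /\ forall y, Rabs (y - x) < delta -> Rabs (f y) <= C.
Proof.
  intros Hf. destruct (Hf (ball (f x) (mkposreal 1 Rlt_0_1)) (locally_ball _ _)) as [d Hd].
  exists (Rabs (f x) + 1), d. split; [apply cond_pos |].
  intros y Hy. specialize (Hd y Hy). change (Rabs (f y - f x) < 1) in Hd.
  pose proof (Rabs_triang_inv (f y) (f x)). lra.
Qed.

(** * Improper integrals of nonnegative functions over (0, +oo) *)

Notation is_RInt_0_oo g l := (is_RInt_gen g (at_right 0) (Rbar_locally p_infty) l).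

Lemma filter_prod_0_oo (P : R * R -> Prop) :
  (forall a b, 0 < a < 1 -> 1 < b -> P (a, b)) ->
  filter_prod (at_right 0) (Rbar_locally p_infty) P.
Proof.
  intros HP. apply Filter_prod with (Q := fun a => 0 < a < 1) (R := fun b => 1 < b).
  - exists (mkposreal 1 Rlt_0_1). intros a Ha Hpos.
    apply Rabs_lt_between' in Ha. simpl in Ha. lra.
  - exists 1. auto.
  - intros a b Ha Hb. apply HP; auto.
Qed.

Lemma ex_RInt_continuous_pos (g : R -> R) a b :
  (forall t, 0 < t -> continuous g t) -> 0 < a -> 0 < b -> ex_RInt g a b.
Proof.
  intros Hc Ha Hb. apply (ex_RInt_continuous (V := R_CompleteNormedModule)).
  intros t Ht. apply Hc.
  assert (0 < Rmin a b) by (apply Rmin_glb_lt; lra). lra.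
Qed.

Lemma RInt_le_antiderivative (g F dF : R -> R) a b : 0 < a <= b ->
  (forall t, 0 < t -> continuous g t) ->
  (forall t, a <= t <= b -> is_derive F t (dF t) /\ continuous dF t /\ g t <= dF t) ->
  RInt g a b <= F b - F a.
Proof.
  intros Hab Hg HF.
  assert (HI : is_RInt dF a b (minus (F b) (F a))).
  { apply (is_RInt_derive (V := R_CompleteNormedModule));
      intros t Ht; rewrite Rmin_left, Rmax_right in Ht by lra; apply HF; lra. }
  replace (F b - F a) with (RInt dF a b)
    by (apply (is_RInt_unique (V := R_CompleteNormedModule)) in HI; exact HI).
  apply RInt_le; [lra | apply ex_RInt_continuous_pos; auto; lra | eexists; eauto |].
  intros t Ht. apply HF. lra.
Qed.

Record pos_integrable (g : R -> R) : Prop := {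
  pos_integrable_cont : forall t, 0 < t -> continuous g t;
  pos_integrable_ge0 : forall t, 0 < t -> 0 <= g t;
  pos_integrable_bounded :
    exists M, forall a b, 0 < a <= 1 -> 1 <= b -> RInt g a b <= M }.

Lemma RInt_nonneg_widen (g : R -> R) a a' b' b :
  (forall t, 0 < t -> continuous g t) -> (forall t, 0 < t -> 0 <= g t) ->
  0 < a <= a' -> a' <= b' <= b -> RInt g a' b' <= RInt g a b.
Proof.
  intros g_cont g_ge0 Ha Hb.
  assert (ex : forall x y, 0 < x -> 0 < y -> ex_RInt g x y)
    by (intros; apply ex_RInt_continuous_pos; auto).
  assert (ge0 : forall x y, 0 < x <= y -> 0 <= RInt g x y).
  { intros x y Hxy. apply RInt_ge_0; [lra | apply ex; lra |].
    intros t Ht. apply g_ge0. lra. }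
  rewrite <- (RInt_Chasles g a a' b), <- (RInt_Chasles g a' b' b) by (apply ex; lra).
  pose proof (ge0 a a' ltac:(lra)). pose proof (ge0 b' b ltac:(lra)).
  unfold plus; simpl. lra.
Qed.

(* The integral is the supremum of the partial integrals, which grow with the interval. *)
Lemma pos_integrable_is_RInt (g : R -> R) :
  pos_integrable g -> exists l, is_RInt_0_oo g l /\
    forall a b, 0 < a <= 1 -> 1 <= b -> RInt g a b <= l.
Proof.
  intros [Hc Hp [M HM]].
  set (E := fun y => exists a b, 0 < a <= 1 /\ 1 <= b /\ y = RInt g a b).
  destruct (completeness E) as [l [Hub Hlub]].
  - exists M. intros y (a & b & Ha & Hb & ->). now apply HM.
  - exists (RInt g 1 1), 1, 1. repeat split; lra.
  - assert (Hle : forall a b, 0 < a <= 1 -> 1 <= b -> RInt g a b <= l)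
      by (intros a b Ha Hb; apply Hub; exists a, b; auto).
    exists l. split; [| exact Hle].
    apply filterlimi_locally. intros eps.
    assert (Hnear : exists a0 b0, 0 < a0 <= 1 /\ 1 <= b0 /\ l - eps < RInt g a0 b0).
    { apply NNPP. intros Hn.
      assert (l <= l - eps).
      { apply Hlub. intros y (a & b & Ha & Hb & ->).
        apply Rnot_lt_le. intros Hlt. apply Hn. exists a, b. auto. }
      destruct eps; simpl in *; lra. }
    destruct Hnear as (a0 & b0 & Ha0 & Hb0 & Hlt).
    assert (Ha0' : 0 < a0) by lra.
    apply Filter_prod with (Q := fun a => 0 < a < a0) (R := fun b => b0 < b).
    + exists (mkposreal a0 Ha0'). intros a Ha Hpos.
      apply Rabs_lt_between' in Ha. simpl in Ha. lra.
    + exists b0. auto.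
    + intros a b Ha Hb. exists (RInt g a b). split.
      * apply (RInt_correct (V := R_CompleteNormedModule)).
        apply ex_RInt_continuous_pos; auto; lra.
      * pose proof (RInt_nonneg_widen g a a0 b0 b Hc Hp ltac:(lra) ltac:(lra)).
        pose proof (Hle a b ltac:(lra) ltac:(lra)).
        change (Rabs (RInt g a b - l) < eps). rewrite Rabs_left1; lra.
Qed.

Lemma pos_integrable_le (g h : R -> R) : pos_integrable h ->
  (forall t, 0 < t -> continuous g t) -> (forall t, 0 < t -> 0 <= g t <= h t) ->
  pos_integrable g.
Proof.
  intros [Hc Hp [M HM]] Hgc Hg. split; [exact Hgc | apply Hg |].
  exists M. intros a b Ha Hb. apply Rle_trans with (RInt h a b); [| now apply HM].
  apply RInt_le; try lra; try (apply ex_RInt_continuous_pos; auto; lra).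
  intros t Ht. apply Hg. lra.
Qed.

Lemma pos_integrable_plus (f g : R -> R) :
  pos_integrable f -> pos_integrable g -> pos_integrable (fun t => f t + g t).
Proof.
  intros [Hcf Hpf [Mf HMf]] [Hcg Hpg [Mg HMg]]. split.
  - intros t Ht. apply (continuous_plus f g); auto.
  - intros t Ht. specialize (Hpf t Ht). specialize (Hpg t Ht). lra.
  - exists (Mf + Mg). intros a b Ha Hb.
    rewrite (RInt_plus f g) by (apply ex_RInt_continuous_pos; auto; lra).
    specialize (HMf a b Ha Hb). specialize (HMg a b Ha Hb). unfold plus; simpl. lra.
Qed.

Lemma pos_integrable_scal (k : R) (f : R -> R) :
  0 <= k -> pos_integrable f -> pos_integrable (fun t => k * f t).
Proof.
  intros Hk [Hc Hp [M HM]]. split.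
  - intros t Ht. apply (continuous_mult (fun _ => k) f); auto. apply continuous_const.
  - intros t Ht. specialize (Hp t Ht). nra.
  - exists (k * M). intros a b Ha Hb.
    rewrite (RInt_scal f) by (apply ex_RInt_continuous_pos; auto; lra).
    specialize (HM a b Ha Hb). unfold scal; simpl; unfold mult; simpl. nra.
Qed.

(* Comparison test: [g = (g + h) - h] with both [g + h] and [h] nonnegative. *)
Lemma is_RInt_0_oo_dominated (g h : R -> R) : pos_integrable h ->
  (forall t, 0 < t -> continuous g t) -> (forall t, 0 < t -> Rabs (g t) <= h t) ->
  exists l, is_RInt_0_oo g l.
Proof.
  intros Hh Hgc Hg.
  assert (Hgh : pos_integrable (fun t => g t + h t)).
  { apply pos_integrable_le with (h := fun t => h t + h t).
    - now apply pos_integrable_plus.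
    - intros t Ht. apply (continuous_plus g h); auto. now apply Hh.
    - intros t Ht. specialize (Hg t Ht). apply Rabs_le_between in Hg. lra. }
  destruct (pos_integrable_is_RInt _ Hgh) as [l1 [Hl1 _]].
  destruct (pos_integrable_is_RInt _ Hh) as [l2 [Hl2 _]].
  exists (minus l1 l2). eapply is_RInt_gen_ext; [| exact (is_RInt_gen_minus _ _ _ _ Hl1 Hl2)].
  apply filter_prod_0_oo. intros a b _ _ t _. simpl. unfold minus, plus, opp; simpl. ring.
Qed.

Lemma is_RInt_0_oo_norm (g h : R -> R) lg lh :
  is_RInt_0_oo g lg -> is_RInt_0_oo h lh ->
  (forall t, 0 < t -> Rabs (g t) <= h t) -> Rabs lg <= lh.
Proof.
  intros Hg Hh Hb.
  apply (RInt_gen_norm (Fa := at_right 0) (Fb := Rbar_locally p_infty) g h lg lh);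
    try assumption.
  - apply filter_prod_0_oo. intros a b Ha Hb'. simpl. lra.
  - apply filter_prod_0_oo. intros a b Ha Hb' t Ht. simpl in Ht. apply Hb. lra.
Qed.

(** * Gamma and its derivatives *)

Definition gamma_kernel (x t : R) : R := exp ((x - 1) * ln t) * exp (- t).

Lemma gamma_kernel_pos x t : 0 < gamma_kernel x t.
Proof. apply Rmult_lt_0_compat; apply exp_pos. Qed.

Lemma continuous_gamma_kernel x t : 0 < t -> continuous (gamma_kernel x) t.
Proof. intros Ht. apply continuous_of_ex_derive. unfold gamma_kernel. auto_derive. lra. Qed.

Lemma gamma_kernel_shift x s t :
  gamma_kernel x t * exp (s * ln t) = gamma_kernel (x + s) t.
Proof.
  unfold gamma_kernel. replace ((x + s - 1) * ln t) with ((x - 1) * ln t + s * ln t) by ring.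
  rewrite exp_plus. ring.
Qed.

Lemma exp_pred_mul_ln x t : 0 < t -> exp ((x - 1) * ln t) = exp (x * ln t) / t.
Proof.
  intros Ht. replace ((x - 1) * ln t) with (x * ln t + - ln t) by ring.
  rewrite exp_plus, exp_Ropp, exp_ln by lra. reflexivity.
Qed.

(* From [ln y <= y - 1] at [y = t / 2K]: [K ln t <= t / 2 + K (ln (2K) - 1)]. *)
Lemma gamma_kernel_tail x : exists D, forall t, 1 <= t ->
  gamma_kernel x t <= exp D * exp (- t / 2).
Proof.
  set (K := Rabs (x - 1) + 1).
  assert (HK : 1 <= K) by (unfold K; pose proof (Rabs_pos (x - 1)); lra).
  exists (K * (ln (2 * K) - 1)). intros t Ht.
  unfold gamma_kernel. rewrite <- !exp_plus. apply exp_le_exp.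
  assert (Hl : 0 <= ln t) by (rewrite <- ln_1; apply ln_le; lra).
  assert (H1 : ln t - ln (2 * K) <= t / (2 * K) - 1).
  { rewrite <- ln_div by lra. pose proof (exp_ineq1_le (ln (t / (2 * K)))) as Hexp.
    rewrite exp_ln in Hexp by (apply Rdiv_lt_0_compat; lra). lra. }
  assert (H2 : (x - 1) * ln t <= K * ln t).
  { apply Rmult_le_compat_r; auto. unfold K. pose proof (Rle_abs (x - 1)). lra. }
  assert (H3 : K * (ln t - ln (2 * K)) <= K * (t / (2 * K) - 1))
    by (apply Rmult_le_compat_l; lra).
  replace (K * (t / (2 * K) - 1)) with (t / 2 - K) in H3 by (field; lra).
  nra.
Qed.

Lemma pos_integrable_gamma_kernel x : 0 < x -> pos_integrable (gamma_kernel x).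
Proof.
  intros Hx. destruct (gamma_kernel_tail x) as [D HD].
  split; [apply continuous_gamma_kernel | intros; left; apply gamma_kernel_pos |].
  exists (1 / x + 2 * exp D). intros a b Ha Hb.
  rewrite <- (RInt_Chasles _ a 1 b)
    by (apply ex_RInt_continuous_pos; [apply continuous_gamma_kernel | lra | lra]).
  unfold plus; simpl. apply Rplus_le_compat.
  - eapply Rle_trans.
    + apply (RInt_le_antiderivative _ (fun t => exp (x * ln t) / x)
               (fun t => exp ((x - 1) * ln t))); [lra | apply continuous_gamma_kernel |].
      intros t Ht. split; [| split].
      * auto_derive; [lra |]. rewrite exp_pred_mul_ln by lra. field. lra.
      * apply continuous_of_ex_derive. auto_derive. lra.
      * unfold gamma_kernel. pose proof (exp_pos ((x - 1) * ln t)).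
        assert (exp (- t) <= 1) by (rewrite <- exp_0; apply exp_le_exp; lra).
        nra.
    + rewrite ln_1, Rmult_0_r, exp_0. pose proof (exp_pos (x * ln a)).
      apply Rmult_le_reg_r with x; auto. field_simplify; lra.
  - eapply Rle_trans.
    + apply (RInt_le_antiderivative _ (fun t => - 2 * exp D * exp (- t / 2))
               (fun t => exp D * exp (- t / 2))); [lra | apply continuous_gamma_kernel |].
      intros t Ht. split; [| split].
      * auto_derive; [auto |]. unfold Rdiv; field.
      * apply continuous_of_ex_derive. auto_derive. auto.
      * apply HD. lra.
    + pose proof (exp_pos D). pose proof (exp_pos (- b / 2)).
      assert (exp (- (1) / 2) <= exp 0) by (apply exp_le_exp; lra). rewrite exp_0 in *.
      nra.
Qed.

Definition gamma_kernel_ln (k : nat) (x t : R) : R := ln t ^ k * gamma_kernel x t.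

Definition Gamma_der (k : nat) (x : R) : R :=
  RInt_gen (gamma_kernel_ln k x) (at_right 0) (Rbar_locally p_infty).

Lemma continuous_gamma_kernel_ln k x t : 0 < t -> continuous (gamma_kernel_ln k x) t.
Proof.
  intros Ht. apply continuous_of_ex_derive. unfold gamma_kernel_ln, gamma_kernel.
  auto_derive. lra.
Qed.

Lemma abs_gamma_kernel_ln_le k x c t : 0 < c -> 0 < t ->
  Rabs (gamma_kernel_ln k x t) <=
  (INR k / c) ^ k * (gamma_kernel (x + c) t + gamma_kernel (x + - c) t).
Proof.
  intros Hc Ht. unfold gamma_kernel_ln.
  rewrite Rabs_mult, <- RPow_abs, (Rabs_right (gamma_kernel x t))
    by (left; apply gamma_kernel_pos).
  rewrite <- !gamma_kernel_shift.
  pose proof (pow_abs_le_exp (ln t) c k Hc). pose proof (gamma_kernel_pos x t).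
  replace (- c * ln t) with (- (c * ln t)) by ring.
  replace ((INR k / c) ^ k * (gamma_kernel x t * exp (c * ln t)
                              + gamma_kernel x t * exp (- (c * ln t))))
    with (gamma_kernel x t * ((INR k / c) ^ k * (exp (c * ln t) + exp (- (c * ln t)))))
    by ring.
  rewrite Rmult_comm. apply Rmult_le_compat_l; lra.
Qed.

Lemma is_RInt_Gamma_der k x : 0 < x -> is_RInt_0_oo (gamma_kernel_ln k x) (Gamma_der k x).
Proof.
  intros Hx.
  assert (Hdom : pos_integrable (fun t => (INR k / (x / 2)) ^ k *
                   (gamma_kernel (x + x / 2) t + gamma_kernel (x + - (x / 2)) t))).
  { apply pos_integrable_scal.
    - apply pow_le, Rmult_le_pos; [apply pos_INR | apply Rlt_le, Rinv_0_lt_compat; lra].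
    - apply pos_integrable_plus; apply pos_integrable_gamma_kernel; lra. }
  destruct (is_RInt_0_oo_dominated (gamma_kernel_ln k x) _ Hdom) as [l Hl].
  - intros t Ht. now apply continuous_gamma_kernel_ln.
  - intros t Ht. apply abs_gamma_kernel_ln_le; lra.
  - unfold Gamma_der. rewrite (is_RInt_gen_unique _ _ Hl). exact Hl.
Qed.

(* Taylor: the remainder is [ln t ^ k * gamma_kernel x t * (exp u - 1 - u)] with
   [u = h ln t]; both [|ln t| ^ (k+2)] and [exp |u|] are absorbed by
   [t ^ (x/4) + t ^ (-x/4)]. *)
Lemma gamma_kernel_ln_remainder k x h t : 0 < x -> Rabs h <= x / 4 -> 0 < t ->
  Rabs (gamma_kernel_ln k (x + h) t - gamma_kernel_ln k x t - h * gamma_kernel_ln (S k) x t)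
  <= h ^ 2 * ((INR (k + 2) / (x / 4)) ^ (k + 2) *
       (gamma_kernel (x + x / 2) t + 2 * gamma_kernel x t + gamma_kernel (x + - (x / 2)) t)).
Proof.
  intros Hx Hh Ht.
  set (L := ln t). set (P := gamma_kernel x t). set (u := h * L).
  set (K := (INR (k + 2) / (x / 4)) ^ (k + 2)).
  set (A := exp (x / 4 * L)). set (B := exp (- (x / 4 * L))).
  assert (HP : 0 < P) by apply gamma_kernel_pos.
  assert (HA : 0 < A) by apply exp_pos. assert (HB : 0 < B) by apply exp_pos.
  assert (HAB : A * B = 1) by (unfold A, B; rewrite <- exp_plus, Rplus_opp_r; apply exp_0).
  assert (HA2 : P * (A * A) = gamma_kernel (x + x / 2) t).
  { rewrite <- gamma_kernel_shift. unfold A. rewrite <- exp_plus. do 2 f_equal. unfold L. field. }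
  assert (HB2 : P * (B * B) = gamma_kernel (x + - (x / 2)) t).
  { rewrite <- gamma_kernel_shift. unfold B. rewrite <- exp_plus. do 2 f_equal. unfold L. field. }
  replace (gamma_kernel_ln k (x + h) t - gamma_kernel_ln k x t - h * gamma_kernel_ln (S k) x t)
    with (L ^ k * P * (exp u - 1 - u))
    by (unfold gamma_kernel_ln; rewrite <- gamma_kernel_shift; fold L P; unfold u; simpl pow; ring).
  destruct (exp_sub_tangent_bound u) as [Hu1 Hu2].
  rewrite !Rabs_mult, (Rabs_right P), (Rabs_right (exp u - 1 - u)), <- RPow_abs by lra.
  assert (HLk : Rabs L ^ (k + 2) <= K * (A + B)) by (apply pow_abs_le_exp; lra).
  assert (Hexp : exp (Rabs u) <= A + B).
  { eapply Rle_trans; [| apply exp_abs_le_cosh]. apply exp_le_exp.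
    unfold u. rewrite !Rabs_mult, (Rabs_right (x / 4)) by lra.
    apply Rmult_le_compat_r; [apply Rabs_pos | lra]. }
  assert (Hu : u ^ 2 = h ^ 2 * Rabs L ^ 2) by (unfold u; rewrite pow2_abs; ring).
  assert (Hsplit : Rabs L ^ (k + 2) = Rabs L ^ k * Rabs L ^ 2) by (rewrite pow_add; ring).
  pose proof (pow_le (Rabs L) k (Rabs_pos L)).
  pose proof (pow_le (Rabs L) (k + 2) (Rabs_pos L)).
  apply Rle_trans with (h ^ 2 * P * (Rabs L ^ (k + 2) * exp (Rabs u))).
  { rewrite Hsplit. replace (h ^ 2 * P * (Rabs L ^ k * Rabs L ^ 2 * exp (Rabs u)))
      with (Rabs L ^ k * P * (u ^ 2 * exp (Rabs u))) by (rewrite Hu; ring).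
    apply Rmult_le_compat_l; nra. }
  rewrite <- HA2, <- HB2.
  replace (2 * P) with (P * (2 * (A * B))) by (rewrite HAB; ring).
  apply Rle_trans with (h ^ 2 * P * (K * (A + B) * (A + B))); [| right; ring].
  apply Rmult_le_compat_l; [pose proof (pow2_ge_0 h); nra |].
  apply Rmult_le_compat; auto; left; apply exp_pos.
Qed.

Lemma Gamma_der_quadratic_remainder k x : 0 < x -> exists C, forall h, Rabs h <= x / 4 ->
  Rabs (Gamma_der k (x + h) - Gamma_der k x - h * Gamma_der (S k) x) <= h ^ 2 * C.
Proof.
  intros Hx.
  set (K := (INR (k + 2) / (x / 4)) ^ (k + 2)).
  set (H := fun t => K * (gamma_kernel (x + x / 2) t + 2 * gamma_kernel x t
                          + gamma_kernel (x + - (x / 2)) t)).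
  assert (HH : pos_integrable H).
  { apply pos_integrable_scal.
    - apply pow_le, Rmult_le_pos; [apply pos_INR | apply Rlt_le, Rinv_0_lt_compat; lra].
    - apply (pos_integrable_plus (fun t => gamma_kernel (x + x / 2) t + 2 * gamma_kernel x t)).
      + apply pos_integrable_plus; [| apply pos_integrable_scal; [lra |]];
          apply pos_integrable_gamma_kernel; lra.
      + apply pos_integrable_gamma_kernel; lra. }
  destruct (pos_integrable_is_RInt _ HH) as [lH [HlH _]].
  exists lH. intros h Hh.
  assert (Hxh : 0 < x + h) by (apply Rabs_le_between in Hh; lra).
  pose proof (is_RInt_gen_minus _ _ _ _
                (is_RInt_gen_minus _ _ _ _ (is_RInt_Gamma_der k (x + h) Hxh)
                   (is_RInt_Gamma_der k x Hx))
                (is_RInt_gen_scal _ h _ (is_RInt_Gamma_der (S k) x Hx))) as Hrem.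
  pose proof (is_RInt_gen_scal _ (h ^ 2) _ HlH) as Hbound.
  pose proof (is_RInt_0_oo_norm _ _ _ _ Hrem Hbound) as Hn.
  unfold minus, plus, opp, scal in Hn; simpl in Hn; unfold mult in Hn; simpl in Hn.
  apply Hn. intros t Ht. now apply gamma_kernel_ln_remainder.
Qed.

Lemma is_derive_Gamma_der k x : 0 < x -> is_derive (Gamma_der k) x (Gamma_der (S k) x).
Proof.
  intros Hx. destruct (Gamma_der_quadratic_remainder k x Hx) as [C HC].
  apply (is_derive_of_quadratic_remainder _ _ _ C (x / 4)); [lra | exact HC].
Qed.

Lemma Gamma_eq_Gamma_der : Gamma = Gamma_der 0.
Proof.
  apply functional_extensionality. intros x. unfold Gamma, Gamma_der, gamma_kernel_ln.
  f_equal. apply functional_extensionality. intros t. unfold gamma_kernel. simpl. ring.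
Qed.

Lemma Gamma_pos x : 0 < x -> 0 < Gamma x.
Proof.
  intros Hx. rewrite Gamma_eq_Gamma_der.
  assert (Hg : pos_integrable (gamma_kernel_ln 0 x)).
  { eapply pos_integrable_le; [apply (pos_integrable_gamma_kernel x Hx) | |].
    - intros t Ht. now apply continuous_gamma_kernel_ln.
    - intros t _. unfold gamma_kernel_ln. simpl. pose proof (gamma_kernel_pos x t). lra. }
  destruct (pos_integrable_is_RInt _ Hg) as [l [Hl Hle]].
  unfold Gamma_der. rewrite (is_RInt_gen_unique _ _ Hl).
  apply Rlt_le_trans with (RInt (gamma_kernel_ln 0 x) 1 2); [| apply Hle; lra].
  apply RInt_gt_0; [lra | |].
  - intros t _. unfold gamma_kernel_ln. simpl. rewrite Rmult_1_l. apply gamma_kernel_pos.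
  - intros t Ht. apply continuous_gamma_kernel_ln. lra.
Qed.

Lemma is_derive_gamma_kernel_succ x t : 0 < t ->
  is_derive (gamma_kernel (x + 1)) t (x * gamma_kernel x t - gamma_kernel (x + 1) t).
Proof.
  intros Ht. unfold gamma_kernel. auto_derive; [lra |].
  replace (x + 1 - 1) with x by ring. rewrite (exp_pred_mul_ln x t Ht). field. lra.
Qed.

Lemma gamma_kernel_succ_lim_0 x : 0 < x ->
  filterlim (gamma_kernel (x + 1)) (at_right 0) (locally 0).
Proof.
  intros Hx. apply filterlim_locally. intros eps.
  exists (mkposreal (exp (ln eps / x)) (exp_pos _)). intros t Ht Htpos.
  apply Rabs_lt_between' in Ht. simpl in Ht.
  change (Rabs (gamma_kernel (x + 1) t - 0) < eps). unfold gamma_kernel.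
  replace (x + 1 - 1) with x by ring.
  rewrite Rminus_0_r, Rabs_right by (left; apply Rmult_lt_0_compat; apply exp_pos).
  assert (exp (- t) <= 1) by (rewrite <- exp_0; apply exp_le_exp; lra).
  assert (Hln : ln t < ln eps / x)
    by (rewrite <- (ln_exp (ln eps / x)); apply ln_increasing; lra).
  assert (exp (x * ln t) < eps).
  { rewrite <- (exp_ln eps) by apply cond_pos. apply exp_increasing.
    apply Rmult_lt_reg_r with (/ x); [apply Rinv_0_lt_compat; lra |].
    replace (x * ln t * / x) with (ln t) by (field; lra). exact Hln. }
  pose proof (exp_pos (x * ln t)). nra.
Qed.

Lemma gamma_kernel_lim_oo x : filterlim (gamma_kernel x) (Rbar_locally p_infty) (locally 0).
Proof.
  apply filterlim_locally. intros eps.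
  destruct (gamma_kernel_tail x) as [D HD].
  exists (Rmax 1 (2 * (D - ln eps))). intros t Ht.
  pose proof (Rmax_l 1 (2 * (D - ln eps))). pose proof (Rmax_r 1 (2 * (D - ln eps))).
  change (Rabs (gamma_kernel x t - 0) < eps).
  rewrite Rminus_0_r, Rabs_right by (left; apply gamma_kernel_pos).
  eapply Rle_lt_trans; [apply HD; lra |]. rewrite <- exp_plus.
  rewrite <- (exp_ln eps) by apply cond_pos. apply exp_increasing. lra.
Qed.

(* Integration by parts: the boundary term [t ^ x e ^ -t] vanishes at [0] and [+oo]. *)
Lemma Gamma_succ x : 0 < x -> Gamma (x + 1) = x * Gamma x.
Proof.
  intros Hx. rewrite Gamma_eq_Gamma_der.
  assert (Hd : forall t, 0 < t ->
            Derive (gamma_kernel (x + 1)) t = x * gamma_kernel x t - gamma_kernel (x + 1) t)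
    by (intros t Ht; apply is_derive_unique, is_derive_gamma_kernel_succ, Ht).
  assert (HI : is_RInt_0_oo (Derive (gamma_kernel (x + 1))) (0 - 0)).
  { apply is_RInt_gen_Derive.
    - apply filter_prod_0_oo. intros a b Ha Hb t Ht. simpl in Ht.
      eexists. apply is_derive_gamma_kernel_succ. pose proof (Rmin_glb_lt a b 0). lra.
    - apply filter_prod_0_oo. intros a b Ha Hb t Ht. simpl in Ht.
      assert (0 < t) by (pose proof (Rmin_glb_lt a b 0); lra).
      apply (continuous_ext_loc _ (fun s => x * gamma_kernel x s - gamma_kernel (x + 1) s)).
      + apply filter_imp with (P := fun s => 0 < s); [| now apply locally_pos].
        intros s Hs. symmetry. now apply Hd.
      + apply continuous_of_ex_derive. unfold gamma_kernel. auto_derive. lra.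
    - now apply gamma_kernel_succ_lim_0.
    - apply gamma_kernel_lim_oo. }
  assert (HI' : is_RInt_0_oo (fun t => x * gamma_kernel_ln 0 x t
                                       + - gamma_kernel_ln 0 (x + 1) t) 0).
  { rewrite Rminus_0_r in HI. eapply is_RInt_gen_ext; [| exact HI].
    apply filter_prod_0_oo. intros a b Ha Hb t Ht. simpl in Ht.
    rewrite Hd by (pose proof (Rmin_glb_lt a b 0); lra).
    unfold gamma_kernel_ln. simpl. ring. }
  assert (Hx1 : 0 < x + 1) by lra.
  pose proof (is_RInt_gen_minus _ _ _ _ (is_RInt_gen_scal _ x _ (is_RInt_Gamma_der 0 x Hx))
                (is_RInt_Gamma_der 0 (x + 1) Hx1)) as Hdiff.
  pose proof (is_RInt_gen_unique _ _ HI') as U1.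
  pose proof (is_RInt_gen_unique _ _ Hdiff) as U2.
  unfold minus, plus, opp, scal in U2; simpl in U2; unfold mult in U2; simpl in U2.
  rewrite U1 in U2. lra.
Qed.

Lemma Gamma_der_0_pos x : 0 < x -> 0 < Gamma_der 0 x.
Proof. rewrite <- Gamma_eq_Gamma_der. apply Gamma_pos. Qed.

(** * Digamma and trigamma *)

Definition trigamma (x : R) : R := Derive digamma x.

Lemma is_derive_lnGamma_ratio x : 0 < x ->
  is_derive lnGamma x (Gamma_der 1 x / Gamma_der 0 x).
Proof.
  intros Hx. unfold lnGamma. rewrite Gamma_eq_Gamma_der.
  pose proof (Gamma_der_0_pos x Hx) as HG.
  pose proof (is_derive_comp ln (Gamma_der 0) x _ _
                (is_derive_ln _ HG) (is_derive_Gamma_der 0 x Hx)) as Hc.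
  unfold scal in Hc; simpl in Hc; unfold mult in Hc; simpl in Hc. exact Hc.
Qed.

Lemma digamma_eq_ratio x : 0 < x -> digamma x = Gamma_der 1 x / Gamma_der 0 x.
Proof. intros Hx. apply is_derive_unique. now apply is_derive_lnGamma_ratio. Qed.

Lemma locally_digamma_eq_ratio x : 0 < x ->
  locally x (fun y => Gamma_der 1 y / Gamma_der 0 y = digamma y).
Proof.
  intros Hx. apply filter_imp with (P := fun y => 0 < y); [| now apply locally_pos].
  intros y Hy. symmetry. now apply digamma_eq_ratio.
Qed.

Lemma is_derive_digamma_ratio x : 0 < x ->
  is_derive digamma x
    ((Gamma_der 2 x * Gamma_der 0 x - Gamma_der 1 x * Gamma_der 1 x) / Gamma_der 0 x ^ 2).
Proof.
  intros Hx. apply (is_derive_ext_loc _ _ _ _ (locally_digamma_eq_ratio x Hx)).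
  pose proof (Gamma_der_0_pos x Hx) as HG.
  apply is_derive_div; [apply is_derive_Gamma_der; lra .. | lra].
Qed.

Lemma is_derive_lnGamma x : 0 < x -> is_derive lnGamma x (digamma x).
Proof. intros Hx. rewrite digamma_eq_ratio by lra. now apply is_derive_lnGamma_ratio. Qed.

Lemma is_derive_digamma x : 0 < x -> is_derive digamma x (trigamma x).
Proof.
  intros Hx. unfold trigamma. rewrite (is_derive_unique _ _ _ (is_derive_digamma_ratio x Hx)).
  now apply is_derive_digamma_ratio.
Qed.

Lemma ex_derive_trigamma x : 0 < x -> ex_derive trigamma x.
Proof.
  intros Hx.
  pose proof (Gamma_der_0_pos x Hx) as HG.
  apply (ex_derive_ext_loc
    (fun y => (Gamma_der 2 y * Gamma_der 0 y - Gamma_der 1 y * Gamma_der 1 y) / Gamma_der 0 y ^ 2)).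
  - apply filter_imp with (P := fun y => 0 < y); [| now apply locally_pos].
    intros y Hy. symmetry. apply is_derive_unique. now apply is_derive_digamma_ratio.
  - assert (HD : forall k, ex_derive (Gamma_der k) x)
      by (intros k; eexists; now apply is_derive_Gamma_der).
    auto_derive; repeat split; auto. nra.
Qed.

Lemma lnGamma_succ x : 0 < x -> lnGamma (x + 1) = lnGamma x + ln x.
Proof.
  intros Hx. unfold lnGamma. rewrite Gamma_succ by exact Hx.
  rewrite ln_mult by (auto; now apply Gamma_pos). ring.
Qed.

Lemma digamma_succ x : 0 < x -> digamma x = digamma (x + 1) - / x.
Proof.
  intros Hx. apply is_derive_unique.
  apply (is_derive_ext_loc (fun y => lnGamma (y + 1) - ln y)).
  - apply filter_imp with (P := fun y => 0 < y); [| now apply locally_pos].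
    intros y Hy. simpl in *. rewrite lnGamma_succ by exact Hy. ring.
  - apply (is_derive_minus (fun y => lnGamma (y + 1)) ln); [| now apply is_derive_ln].
    pose proof (is_derive_comp lnGamma (fun y => y + 1) x _ _
                  (is_derive_lnGamma (x + 1) ltac:(lra)) (is_derive_succ x)) as Hc.
    unfold scal in Hc; simpl in Hc; unfold mult in Hc; simpl in Hc.
    now rewrite Rmult_1_l in Hc.
Qed.

Lemma trigamma_succ x : 0 < x -> trigamma x = trigamma (x + 1) + / x ^ 2.
Proof.
  intros Hx. apply is_derive_unique.
  apply (is_derive_ext_loc (fun y => digamma (y + 1) - / y)).
  - apply filter_imp with (P := fun y => 0 < y); [| now apply locally_pos].
    intros y Hy. simpl in *. symmetry. now apply digamma_succ.
  - replace (trigamma (x + 1) + / x ^ 2) with (trigamma (x + 1) - (- 1 / x ^ 2)) by (field; lra).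
    apply (is_derive_minus (fun y => digamma (y + 1)) (fun y => / y)).
    + pose proof (is_derive_comp digamma (fun y => y + 1) x _ _
                    (is_derive_digamma (x + 1) ltac:(lra)) (is_derive_succ x)) as Hc.
      unfold scal in Hc; simpl in Hc; unfold mult in Hc; simpl in Hc.
      now rewrite Rmult_1_l in Hc.
    + apply (is_derive_inv (fun y => y)); [apply (is_derive_id (K := R_AbsRing)) | lra].
Qed.

(** * The gradient coefficients of L_ICRM *)

Definition L_ICRM_lnGamma (a0 b0 lam mu tau : R) : R :=
  - (digamma (mu * tau) - digamma tau)
  + lam * (lnGamma tau - lnGamma (mu * tau) - lnGamma ((1 - mu) * tau)
           - ln (Gamma (a0 + b0) / (Gamma a0 * Gamma b0))
           + (mu * tau - a0) * (digamma (mu * tau) - digamma tau)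
           + ((1 - mu) * tau - b0) * (digamma ((1 - mu) * tau) - digamma tau)).

Lemma L_ICRM_eq_lnGamma a0 b0 lam mu tau : 0 < mu * tau -> 0 < (1 - mu) * tau ->
  L_ICRM a0 b0 lam mu tau = L_ICRM_lnGamma a0 b0 lam mu tau.
Proof.
  intros Ha Hb. unfold L_ICRM, L_ICRM_lnGamma, KL_beta, lnGamma.
  replace (mu * tau + (1 - mu) * tau) with tau by ring.
  assert (Htau : 0 < tau) by nra.
  pose proof (Gamma_pos _ Ha). pose proof (Gamma_pos _ Hb). pose proof (Gamma_pos _ Htau).
  rewrite ln_div, ln_mult by (try apply Rmult_lt_0_compat; auto). ring.
Qed.

(* Side conditions of [auto_derive]; matched syntactically, since unifying [digamma]
   with [lnGamma] would unfold the integral defining [Gamma]. *)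
Ltac ex_derive_lnGamma_digamma :=
  match goal with
  | |- ex_derive (fun x => lnGamma x) _ => eexists; apply is_derive_lnGamma
  | |- ex_derive (fun x => digamma x) _ => eexists; apply is_derive_digamma
  end.

Lemma Derive_L_ICRM_mu a0 b0 lam mu tau : 0 < mu < 1 -> 0 < tau ->
  Derive (fun m => L_ICRM a0 b0 lam m tau) mu =
  - tau * trigamma (mu * tau)
  + lam * tau * ((mu * tau - a0) * trigamma (mu * tau)
                 - ((1 - mu) * tau - b0) * trigamma ((1 - mu) * tau)).
Proof.
  intros Hmu Htau.
  rewrite (Derive_ext_loc _ (fun m => L_ICRM_lnGamma a0 b0 lam m tau)).
  - apply is_derive_unique. unfold L_ICRM_lnGamma. auto_derive.
    + repeat split; ex_derive_lnGamma_digamma; nra.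
    + change (fun x => lnGamma x) with lnGamma. change (fun x => digamma x) with digamma.
      unfold trigamma, digamma. replace (1 + - mu) with (1 - mu) by ring. ring.
  - apply filter_imp with (P := fun m => 0 < m < 1); [| now apply locally_interval].
    intros m Hm. apply L_ICRM_eq_lnGamma; nra.
Qed.

Lemma Derive_L_ICRM_tau a0 b0 lam mu tau : 0 < mu < 1 -> 0 < tau ->
  Derive (fun t => L_ICRM a0 b0 lam mu t) tau =
  - (mu * trigamma (mu * tau) - trigamma tau)
  + lam * ((mu * tau - a0) * (mu * trigamma (mu * tau) - trigamma tau)
           + ((1 - mu) * tau - b0) * ((1 - mu) * trigamma ((1 - mu) * tau) - trigamma tau)).
Proof.
  intros Hmu Htau.
  rewrite (Derive_ext_loc _ (fun t => L_ICRM_lnGamma a0 b0 lam mu t)).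
  - apply is_derive_unique. unfold L_ICRM_lnGamma. auto_derive.
    + repeat split; ex_derive_lnGamma_digamma; nra.
    + change (fun x => lnGamma x) with lnGamma. change (fun x => digamma x) with digamma.
      unfold trigamma, digamma. ring.
  - apply filter_imp with (P := fun t => 0 < t); [| now apply locally_pos].
    intros t Ht. apply L_ICRM_eq_lnGamma; simpl in Ht; nra.
Qed.

Definition c_u_remainder (a0 b0 lam tau eps : R) : R :=
  (1 - eps) * eps * tau *
    ((lam * ((1 - eps) * tau - a0) - 1) * trigamma ((1 - eps) * tau)
     - lam * (eps * tau - b0) * trigamma (eps * tau + 1))
  - lam * (1 - eps) - lam * b0 / tau.

Definition c_tau_remainder (a0 b0 lam tau eps : R) : R :=
  (lam * ((1 - eps) * tau - a0) - 1) * ((1 - eps) * trigamma ((1 - eps) * tau) - trigamma tau)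
  + lam * (eps * tau - b0) * (eps * trigamma (eps * tau + 1) - trigamma tau)
  + lam / tau.

Lemma c_u_one_sub a0 b0 lam tau eps : 0 < tau -> 0 < eps < 1 ->
  c_u a0 b0 lam (1 - eps) tau = lam * b0 / (eps * tau) + c_u_remainder a0 b0 lam tau eps.
Proof.
  intros Htau Heps. unfold c_u, c_u_remainder.
  rewrite Derive_L_ICRM_mu by lra.
  replace (1 - (1 - eps)) with eps by ring.
  rewrite (trigamma_succ (eps * tau)) by nra.
  field. lra.
Qed.

Lemma c_tau_one_sub a0 b0 lam tau eps : 0 < tau -> 0 < eps < 1 ->
  c_tau a0 b0 lam (1 - eps) tau =
  - (lam * b0 / (eps * tau ^ 2)) + c_tau_remainder a0 b0 lam tau eps.
Proof.
  intros Htau Heps. unfold c_tau, c_tau_remainder.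
  rewrite Derive_L_ICRM_tau by lra.
  replace (1 - (1 - eps)) with eps by ring.
  rewrite (trigamma_succ (eps * tau)) by nra.
  field. lra.
Qed.

Lemma ex_derive_c_u_remainder a0 b0 lam tau : 0 < tau ->
  ex_derive (c_u_remainder a0 b0 lam tau) 0.
Proof.
  intros Htau. unfold c_u_remainder. auto_derive.
  repeat split; apply ex_derive_trigamma; lra.
Qed.

Lemma ex_derive_c_tau_remainder a0 b0 lam tau : 0 < tau ->
  ex_derive (c_tau_remainder a0 b0 lam tau) 0.
Proof.
  intros Htau. unfold c_tau_remainder. auto_derive.
  repeat split; apply ex_derive_trigamma; lra.
Qed.

Theorem lemma8p1 (a0 b0 lam tau : R) :
  0 < a0 -> 0 < b0 -> 0 < lam -> 0 < tau ->
  exists C delta : R, 0 < delta /\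
    forall eps : R, 0 < eps < delta ->
      Rabs (c_u a0 b0 lam (1 - eps) tau - lam * b0 / (eps * tau)) <= C /\
      Rabs (c_tau a0 b0 lam (1 - eps) tau + lam * b0 / (eps * tau ^ 2)) <= C.
Proof.
  intros _ _ _ Htau.
  destruct (bounded_near_of_continuous (c_u_remainder a0 b0 lam tau) 0)
    as (Cu & du & Hdu & HCu).
  { apply continuous_of_ex_derive, ex_derive_c_u_remainder, Htau. }
  destruct (bounded_near_of_continuous (c_tau_remainder a0 b0 lam tau) 0)
    as (Ct & dt & Hdt & HCt).
  { apply continuous_of_ex_derive, ex_derive_c_tau_remainder, Htau. }
  exists (Rmax Cu Ct), (Rmin 1 (Rmin du dt)).
  split; [repeat apply Rmin_glb_lt; lra |].
  intros eps Heps.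
  pose proof (Rmin_l 1 (Rmin du dt)). pose proof (Rmin_r 1 (Rmin du dt)).
  pose proof (Rmin_l du dt). pose proof (Rmin_r du dt).
  assert (Habs : Rabs (eps - 0) = eps) by (rewrite Rminus_0_r; apply Rabs_right; lra).
  rewrite c_u_one_sub, c_tau_one_sub by lra.
  split.
  - replace (_ + _ - _) with (c_u_remainder a0 b0 lam tau eps) by ring.
    eapply Rle_trans; [apply HCu; lra | apply Rmax_l].
  - replace (_ + _ + _) with (c_tau_remainder a0 b0 lam tau eps) by ring.
    eapply Rle_trans; [apply HCt; lra | apply Rmax_r].
Qed.
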